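(* There exists a fully-dynamic bin packing algorithm with constant worst-case recourse under general movement costs which, given items all of whose sizes satisfy $s_i\in[1/k,1/(k-1))$ for some integer $k\ge1$, packs them into bins of which all but one contain $k-1$ items and are hence at least $1-1/k$ full. (If all items have size $1/k$, the algorithm packs $k$ items in all bins but one.)
   Context: Fully-dynamic bin packing: items (size $s_i$, arbitrary movement cost $c_i\ge0$) are inserted and deleted over time; the algorithm maintains a packing of the current items into unit bins, paying $c_i$ each time it moves item $i$. Worst-case recourse $\gamma$ means that at each update the total movement cost incurred is at most $\gamma\cdot c_t$, where $c_t$ is the movement cost of the item inserted or deleted at that update. *)

From HB Require Import structures.
From mathcomp Require Import all_boot all_order all_algebra.
Set Implicit Arguments. Unset Strict Implicit. Unset Printing Implicit Defensive.
Import Order.TTheory GRing.Theory Num.Theory.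
Local Open Scope ring_scope.

Section BinPacking.
Variable R : realFieldType.

(* An update: insert item with identifier [i], size [s] and movement cost [c],
   or delete the (currently present) item with identifier [i]. *)
Inductive update := Ins of nat & R & R | Del of nat.

Definition uid (u : update) : nat := match u with Ins i _ _ => i | Del i => i end.

Definition info (h : seq update) (i : nat) : option (R * R) :=
  foldl (fun o u => match u with
                    | Ins j s c => if j == i then Some (s, c) else o
                    | Del j => if j == i then None else o end) None h.

Definition present (h : seq update) (i : nat) : bool := info h i.
Definition isize (h : seq update) (i : nat) : R :=
  if info h i is Some (s, _) then s else 0.
Definition icost (h : seq update) (i : nat) : R :=
  if info h i is Some (_, c) then c else 0.

Definition items (h : seq update) : seq nat :=
  [seq i <- undup (map uid h) | present h i].

Fixpoint wf_rev (h : seq update) : bool :=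
  match h with
  | [::] => true
  | u :: h' => wf_rev h' &&
      match u with Ins i _ _ => ~~ present (rev h') i | Del i => present (rev h') i end
  end.
Definition wf (h : seq update) : bool := wf_rev (rev h).

Definition inputs_ok (P : R -> bool) (h : seq update) : bool :=
  all (fun u => if u is Ins _ s c then P s && (0 <= c) else true) h.

(* A (deterministic, online) algorithm maps the history of updates so far to
   the current packing: an assignment of item identifiers to bin labels. *)
Definition algorithm := seq update -> nat -> nat.

Definition load (h : seq update) (p : nat -> nat) (b : nat) : R :=
  \sum_(i <- items h | p i == b) isize h i.
Definition nitems (h : seq update) (p : nat -> nat) (b : nat) : nat :=
  size [seq i <- items h | p i == b].
Definition used_bins (h : seq update) (p : nat -> nat) : seq nat :=
  undup (map p (items h)).

Definition feasible (h : seq update) (p : nat -> nat) : Prop :=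
  forall b, load h p b <= 1.

Definition move_cost (A : algorithm) (h : seq update) (u : update) : R :=
  \sum_(i <- items h | present (rcons h u) i && (A h i != A (rcons h u) i)) icost h i.

Definition upd_cost (h : seq update) (u : update) : R :=
  match u with Ins _ _ c => c | Del i => icost h i end.

Definition recourse_bounded (A : algorithm) (gamma : R) (P : R -> bool) : Prop :=
  forall h u, wf (rcons h u) -> inputs_ok P (rcons h u) ->
    move_cost A h u <= gamma * upd_cost h u.

Definition packs_all_but_one (A : algorithm) (P : R -> bool) (m : nat) : Prop :=
  forall h, wf h -> inputs_ok P h ->
    feasible h (A h) /\
    (size [seq b <- used_bins h (A h) | nitems h (A h) b != m] <= 1)%N.

Definition size_class (k : nat) (s : R) : bool :=
  ((k%:R)^-1 <= s) && (s < ((k.-1)%:R)^-1).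
Definition size_exact (k : nat) (s : R) : bool := s == (k%:R)^-1.

End BinPacking.

From mathcomp Require Import all_boot all_order all_algebra.
From mathcomp Require Import lra zify.
Set Implicit Arguments. Unset Strict Implicit. Unset Printing Implicit Defensive.
Import Order.TTheory GRing.Theory Num.Theory.
Local Open Scope ring_scope.

(* The items present are kept in a sequence whose costs decrease up to a
   factor 2 (if a precedes b then c_b <= 2 c_a), and bin q holds the items at
   positions q m, ..., q m + m - 1.  So every bin but the last holds exactly m
   items, and m items of size at most 1/m fit in a bin.  An insertion puts the
   new item y into the slot of the first item it outweighs by a factor 2, which
   is reinserted further on in the same way: the displaced items form a chain
   whose costs halve at each step, so they cost at most c_y in total.  A
   deletion of j pulls a similar chain forward into the hole; its head comes
   after j, hence costs at most 2 c_j, and the chain at most 4 c_j.  All other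
   items keep their position, hence their bin. *)

Lemma ler_sum_uniq_sub (R : numDomainType) (I : eqType) (s s' : seq I) (F : I -> R) :
  uniq s -> uniq s' -> {subset s <= s'} -> {in s', forall i, 0 <= F i} ->
  \sum_(i <- s) F i <= \sum_(i <- s') F i.
Proof.
move=> us us' ss' F_ge0; rewrite [X in _ <= X](bigID (mem s)) /=.
have -> : \sum_(i <- s' | i \in s) F i = \sum_(i <- s) F i.
  rewrite -big_filter; apply/perm_big/uniq_perm; rewrite ?filter_uniq // => i.
  by rewrite mem_filter andb_idr //; apply: ss'.
by rewrite lerDl big_seq_cond sumr_ge0 // => i /andP[/F_ge0].
Qed.

Lemma count_index_div (T : eqType) (s : seq T) m b : uniq s -> (0 < m)%N ->
  count (fun i => index i s %/ m == b)%N s = minn m (size s - b * m)%N.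
Proof.
move=> us m_gt0; rewrite -(count_map (index^~ s) (fun k => k %/ m == b)%N).
have -> : map (index^~ s) s = iota 0 (size s).
  case: s us => [//|x0 s'] us; set s := x0 :: s'.
  rewrite -{2}(mkseq_nth x0 s) -map_comp -[RHS]map_id; apply/eq_in_map => k.
  by rewrite mem_iota add0n => lt_k; apply: (nthK x0 us).
elim: (size s) => [|n IH]; first by rewrite minn0.
rewrite -addn1 iotaD count_cat IH /= addn0 add0n.
rewrite eqn_leq leq_divRL // -ltnS ltn_divLR // mulSn.
move: (b * m) => bm; lia.
Qed.

Section DisplacementChains.
Variables (R : realFieldType) (c : nat -> R).
Hypothesis c_ge0 : forall i, 0 <= c i.

Definition le_double : rel nat := fun a b => c b <= 2 * c a.

Fixpoint bump_insert y s :=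
  if s is a :: s' then
    if 2 * c a < c y then y :: bump_insert a s' else a :: bump_insert y s'
  else [:: y].

Fixpoint bumped y s :=
  if s is a :: s' then
    if 2 * c a < c y then a :: bumped a s' else bumped y s'
  else [::].

Lemma perm_bump_insert y s : perm_eq (bump_insert y s) (y :: s).
Proof.
elim: s y => [//|a s IH] y /=; case: ifP => _; first by rewrite perm_cons.
by rewrite perm_sym (perm_catCA [:: y] [:: a]) /= perm_cons perm_sym.
Qed.

Lemma pairwise_bump_insert y s :
  pairwise le_double s -> pairwise le_double (bump_insert y s).
Proof.
elim: s y => [//|a s IH] y /andP[a_dom s_ok] /=.
have mem_bi x : bump_insert x s =i x :: s by apply/perm_mem/perm_bump_insert.
case: ifP => [lt_ay | /negbT]; rewrite ?pairwise_cons IH // andbT.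
  apply/allP => z; rewrite mem_bi inE.
  by case/predU1P => [->|/(allP a_dom)]; rewrite /le_double; have := c_ge0 y; lra.
rewrite -leNgt => le_ya; apply/allP => z; rewrite mem_bi inE.
by case/predU1P => [->|/(allP a_dom)].
Qed.

Lemma bumped_sub y s : {subset bumped y s <= s}.
Proof.
elim: s y => [//|a s IH] y /= z; case: ifP => _; last by move/IH; rewrite inE orbC => ->.
by rewrite !inE => /predU1P[->|/IH->]; rewrite ?eqxx ?orbT.
Qed.

Lemma uniq_bumped y s : uniq s -> uniq (bumped y s).
Proof.
elim: s y => [//|a s IH] y /= /andP[a_s us]; case: ifP => _ /=; last exact: IH.
by rewrite IH // andbT; apply: contra a_s => /bumped_sub.
Qed.

Lemma sum_bumped y s : \sum_(i <- bumped y s) c i <= c y.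
Proof.
elim: s y => [|a s IH] y /=; first by rewrite big_nil.
case: ifP => lt_ay; last exact: IH.
by rewrite big_cons; have := IH a; lra.
Qed.

Lemma index_bump_insert y s z : uniq (y :: s) -> z \in s -> z \notin bumped y s ->
  index z (bump_insert y s) = index z s.
Proof.
elim: s y => [//|a s IH] y /= /and3P[]; rewrite inE negb_or => /andP[ya ys] a_s us.
case: ifP => _ /=.
- rewrite inE negb_or => /predU1P[->|zs] /andP[za zb]; first by rewrite eqxx in za.
  have yz : (y == z) = false by apply: contraNF ys => /eqP->.
  by rewrite yz eq_sym (negbTE za) IH //= a_s.
- case: eqVneq => // az; rewrite inE => /predU1P[za|zs] zb.
    by rewrite za eqxx in az.
  by rewrite IH //= ys.
Qed.

(* [refill t] fills the hole just before [t] and frees the last slot of [t]: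
   the head of [refill t] takes the hole, its old slot is taken by the next item
   of [refill_moved t], and so on; all other items keep their slot. *)
Fixpoint refill t :=
  if t is b :: t' then
    if refill t' is y :: r then
      if 2 * c y < c b then b :: y :: r else y :: b :: r
    else [:: b]
  else [::].

Fixpoint refill_moved t :=
  if t is b :: t' then
    if refill t' is y :: _ then
      if 2 * c y < c b then b :: refill_moved t' else refill_moved t'
    else [:: b]
  else [::].

Lemma perm_refill t : perm_eq (refill t) t.
Proof.
elim: t => [//|b t IH] /=; case E: (refill t) => [|y r].
  by move: IH; rewrite E perm_sym => /perm_nilP->.
case: ifP => _; first by rewrite perm_cons -E.
by rewrite (perm_catCA [:: y] [:: b]) /= perm_cons -E.
Qed.

Lemma pairwise_refill t : pairwise le_double t -> pairwise le_double (refill t).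
Proof.
elim: t => [//|b t IH] /andP[b_dom t_ok] /=.
have {}b_dom : all (le_double b) (refill t) by rewrite (perm_all _ (perm_refill t)).
case E: (refill t) => [//|y r]; rewrite E in b_dom.
case: ifP => [_|/negbT]; first by rewrite pairwise_cons b_dom -E IH.
rewrite -leNgt => le_by; move: (IH t_ok) b_dom; rewrite E /= => /andP[-> ->] /andP[_ ->].
by rewrite /le_double le_by.
Qed.

Lemma refill_moved_sub t : {subset refill_moved t <= t}.
Proof.
elim: t => [//|b t IH] /= z; case: (refill t) => [|y r]; first by rewrite !inE => ->.
case: ifP => _; last by move/IH; rewrite inE orbC => ->.
by rewrite !inE => /predU1P[->|/IH->]; rewrite ?eqxx ?orbT.
Qed.

Lemma uniq_refill_moved t : uniq t -> uniq (refill_moved t).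
Proof.
elim: t => [//|b t IH] /= /andP[bt ut]; case: (refill t) => [//|y r].
case: ifP => _ /=; last exact: IH.
by rewrite IH // andbT; apply: contra bt => /refill_moved_sub.
Qed.

Lemma sum_refill_moved t y r : refill t = y :: r ->
  \sum_(i <- refill_moved t) c i <= 2 * c y.
Proof.
elim: t y r => [//|b t IH] y r /=; case E: (refill t) => [|y' r'].
  by move=> [<- _]; rewrite big_seq1; have := c_ge0 b; lra.
have := IH _ _ E; case: ifP => lt_yb sum_y [<- _] //.
by rewrite big_cons; lra.
Qed.

Lemma index_refill t z : uniq t -> z \in t -> z \notin refill_moved t ->
  index z (refill t) = (index z t).+1.
Proof.
elim: t => [//|b t IH] /= /andP[bt ut]; case E: (refill t) => [|y r].
  by move: (perm_refill t); rewrite E perm_sym => /perm_nilP-> ->.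
have yt : y \in t by rewrite -(perm_mem (perm_refill t)) E mem_head.
have yb : (y == b) = false by apply: contraNF bt => /eqP<-.
rewrite inE => /predU1P[->|zt]; first by case: ifP; rewrite /= ?inE eqxx ?yb.
have bz : (b == z) = false by apply: contraNF bt => /eqP->.
case: ifP => _; rewrite /= ?inE ?negb_or ?(eq_sym z) ?bz /= => zm;
  move: (IH ut zt zm); rewrite E /= ?bz; first by move=> ->.
by case: eqVneq => // _ [->].
Qed.

Definition bump_delete j s :=
  take (index j s) s ++ refill (drop (index j s).+1 s).

Definition delete_moved j s := refill_moved (drop (index j s).+1 s).

Lemma bump_delete_cat j pre t : j \notin pre ->
  bump_delete j (pre ++ j :: t) = pre ++ refill t /\
  delete_moved j (pre ++ j :: t) = refill_moved t.
Proof.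
move=> j_pre; rewrite /bump_delete /delete_moved index_cat (negbTE j_pre) /= eqxx.
by rewrite addn0 take_size_cat // drop_cat ltnNge leqnSn subSnn /= drop0.
Qed.

Lemma uniq_delete_moved j s : uniq s -> uniq (delete_moved j s).
Proof. by move=> us; apply/uniq_refill_moved/drop_uniq. Qed.

Lemma perm_bump_delete j s : perm_eq (bump_delete j s) (rem j s).
Proof. by rewrite /bump_delete remE perm_cat2l perm_refill. Qed.

Lemma pairwise_bump_delete j s :
  pairwise le_double s -> pairwise le_double (bump_delete j s).
Proof.
move/(subseq_pairwise (rem_subseq j s)); rewrite remE !pairwise_cat.
case/and3P=> pre_t -> t_ok; rewrite pairwise_refill // andbT.
by rewrite (eq_allrel_memr _ _ (perm_mem (perm_refill _))) pre_t.
Qed.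

Lemma index_bump_delete j s z : uniq s -> j \in s -> z \in s -> z != j ->
  z \notin delete_moved j s -> index z (bump_delete j s) = index z s.
Proof.
move=> + js; case/splitPr: js => pre t.
rewrite cat_uniq /= => /and3P[_ /norP[j_pre _] /andP[_ ut]].
have [-> ->] := bump_delete_cat t j_pre.
rewrite mem_cat inE !index_cat => z_s zj zm; case: ifP => //= z_pre.
rewrite eq_sym (negbTE zj) index_refill //.
by move: z_s; rewrite z_pre (negbTE zj).
Qed.

Lemma sum_delete_moved j s : uniq s -> j \in s -> pairwise le_double s ->
  \sum_(i <- delete_moved j s) c i <= 4 * c j.
Proof.
move=> + js; case/splitPr: js => pre t.
rewrite cat_uniq /= => /and3P[_ /norP[j_pre _] _].
have [_ ->] := bump_delete_cat t j_pre.
rewrite pairwise_cat pairwise_cons => /and3P[_ _ /andP[/allP le_j _]].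
have cj_ge0 := c_ge0 j; case E: (refill t) => [|y r].
  by move: (perm_refill t); rewrite E perm_sym => /perm_nilP->; rewrite big_nil; lra.
have yt : y \in t by rewrite -(perm_mem (perm_refill t)) E mem_head.
by have := sum_refill_moved E; have := le_j y yt; rewrite /le_double; lra.
Qed.

End DisplacementChains.

Section Histories.
Variable R : realFieldType.
Implicit Types (h : seq (update R)) (u : update R).

Lemma info_rcons h u i : info (rcons h u) i =
  match u with Ins j s c => if j == i then Some (s, c) else info h i
             | Del j => if j == i then None else info h i end.
Proof. by rewrite /info foldl_rcons. Qed.

Lemma present_rcons h u i : present (rcons h u) i =
  match u with Ins j _ _ => (j == i) || present h i
             | Del j => (j != i) && present h i end.
Proof. by rewrite /present info_rcons; case: u => [j s c|j]; case: eqP. Qed.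

Lemma icost_rcons h u i : uid u != i -> icost (rcons h u) i = icost h i.
Proof. by rewrite /icost info_rcons; case: u => [j s c|j] /= /negbTE ->. Qed.

Lemma wf_rcons h u : wf (rcons h u) = wf h &&
  match u with Ins i _ _ => ~~ present h i | Del i => present h i end.
Proof. by rewrite /wf rev_rcons /= revK. Qed.

Lemma inputs_ok_rcons P h u : inputs_ok P (rcons h u) -> inputs_ok P h.
Proof. by rewrite /inputs_ok all_rcons => /andP[]. Qed.

Lemma info_inputs_ok P h i s c :
  inputs_ok P h -> info h i = Some (s, c) -> P s && (0 <= c).
Proof.
elim/last_ind: h => [//|h u IH] ok_hu; have {}IH := IH (inputs_ok_rcons ok_hu).
move: ok_hu; rewrite info_rcons /inputs_ok all_rcons.
by case: u => [j s' c'|j] /andP[ok_u _]; case: eqP => // _ [<- <-].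
Qed.

Lemma icost_ge0 P h i : inputs_ok P h -> 0 <= icost h i.
Proof.
rewrite /icost; case E: (info h i) => [[s c]|] ok_h //.
by case/andP: (info_inputs_ok ok_h E).
Qed.

Lemma isize_inputs_ok (P : pred R) h i : inputs_ok P h -> present h i -> P (isize h i).
Proof.
rewrite /present /isize; case E: (info h i) => [[s c]|] ok_h //.
by case/andP: (info_inputs_ok ok_h E).
Qed.

Lemma present_uid h i : present h i -> i \in map (@uid R) h.
Proof.
elim/last_ind: h => [//|h u IH]; rewrite present_rcons map_rcons mem_rcons inE.
case: u => [j s c|j] /=; last by case/andP => _ /IH ->; rewrite orbT.
by case/orP => [/eqP->|/IH->]; rewrite ?eqxx ?orbT.
Qed.

Lemma mem_items h i : (i \in items h) = present h i.
Proof.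
rewrite /items mem_filter mem_undup andb_idr //; exact: present_uid.
Qed.

Lemma uniq_items h : uniq (items h).
Proof. exact/filter_uniq/undup_uniq. Qed.

End Histories.

Section BlockPacking.
Variable R : realFieldType.
Implicit Types (h : seq (update R)) (u : update R) (s : seq nat).

Definition order_step h s u : seq nat :=
  match u with
  | Ins i _ _ => bump_insert (icost (rcons h u)) i s
  | Del i => bump_delete (icost h) i s
  end.

Fixpoint order_rev (rh : seq (update R)) : seq nat :=
  if rh is u :: rh' then order_step (rev rh') (order_rev rh') u else [::].

Definition order h := order_rev (rev h).

Lemma order_rcons h u : order (rcons h u) = order_step h (order h) u.
Proof. by rewrite /order rev_rcons /= revK. Qed.

Definition block_packing (m : nat) : algorithm R :=
  fun h i => (index i (order h) %/ m)%N.

Definition order_inv h s :=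
  [/\ uniq s, forall i, (i \in s) = present h i & pairwise (le_double (icost h)) s].

Lemma order_inv_step P h u s : wf (rcons h u) -> inputs_ok P (rcons h u) ->
  order_inv h s -> order_inv (rcons h u) (order_step h s u).
Proof.
rewrite wf_rcons => /andP[_ ok_u] ok_hu [us mem_s ps].
have transfer s' : {in s', icost h =1 icost (rcons h u)} ->
    pairwise (le_double (icost h)) s' -> pairwise (le_double (icost (rcons h u))) s'.
  move=> E; rewrite (@eq_in_pairwise _ (mem s') _ (le_double (icost (rcons h u)))) ?allss //.
  by move=> a b a_s b_s; rewrite /le_double !E.
have icostE s' : uid u \notin s' -> {in s', icost h =1 icost (rcons h u)}.
  by move=> u_s i i_s; rewrite icost_rcons //; apply: contraNneq u_s => ->.
case: u ok_u ok_hu icostE transfer => [j sz cj|j] /= j_h ok_hu icostE transfer.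
- have j_s : j \notin s by rewrite mem_s.
  have mem_ins := perm_mem (perm_bump_insert (icost (rcons h (Ins j sz cj))) j s).
  split.
  + by rewrite (perm_uniq (perm_bump_insert _ _ _)) /= j_s.
  + by move=> i; rewrite mem_ins present_rcons inE mem_s eq_sym.
  + apply: pairwise_bump_insert; first by move=> i; apply: icost_ge0 ok_hu.
    by apply: transfer ps; apply: icostE.
- have mem_del i : (i \in bump_delete (icost h) j s) = (i != j) && (i \in s).
    by rewrite (perm_mem (perm_bump_delete _ _ _)) mem_rem_uniq.
  split.
  + by rewrite (perm_uniq (perm_bump_delete _ _ _)) rem_uniq.
  + by move=> i; rewrite mem_del present_rcons mem_s eq_sym.
  + apply/transfer/pairwise_bump_delete/ps; apply/icostE.
    by rewrite mem_del eqxx.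
Qed.

Lemma orderP P h : wf h -> inputs_ok P h -> order_inv h (order h).
Proof.
elim/last_ind: h => [|h u IH] wf_hu ok_hu; first by split => // i; rewrite /present.
rewrite order_rcons; apply: (order_inv_step wf_hu ok_hu); apply: IH.
  by move: wf_hu; rewrite wf_rcons => /andP[].
exact: inputs_ok_rcons ok_hu.
Qed.

Lemma move_cost_block_le m h u M : uniq M -> (forall i, 0 <= icost h i) ->
  (forall i, i \in items h -> present (rcons h u) i -> i \notin M ->
     index i (order (rcons h u)) = index i (order h)) ->
  move_cost (block_packing m) h u <= \sum_(i <- M) icost h i.
Proof.
move=> uM c_ge0 stay; rewrite /move_cost -big_filter.
apply: ler_sum_uniq_sub => //; first exact/filter_uniq/uniq_items.
move=> i; rewrite mem_filter => /andP[/andP[i_hu moved] i_h].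
apply: contraNT moved => /(stay _ i_h i_hu) eq_idx.
by rewrite /block_packing eq_idx eqxx.
Qed.

Lemma block_packing_recourse m P : recourse_bounded (block_packing m) 4 P.
Proof.
move=> h u; rewrite wf_rcons => /andP[wf_h j_h] ok_hu.
have ok_h := inputs_ok_rcons ok_hu.
have [us mem_s ps] := orderP wf_h ok_h.
have c_ge0 i : 0 <= icost h i by apply: icost_ge0 ok_h.
have mem_order i : i \in items h -> i \in order h by rewrite mem_s -mem_items.
case: u j_h ok_hu => [j sz cj|j] /= j_h ok_hu.
- set c' := icost (rcons h (Ins j sz cj)).
  have j_s : j \notin order h by rewrite mem_s.
  have c'_ge0 i : 0 <= c' i by apply: icost_ge0 ok_hu.
  have c'_j : c' j = cj by rewrite /c' /icost info_rcons eqxx.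
  apply: (le_trans (move_cost_block_le m (M := bumped c' j (order h)) _ _ _)) => //.
  + exact: uniq_bumped.
  + move=> i /mem_order i_s _ i_nb.
    by rewrite order_rcons index_bump_insert //= j_s.
  rewrite (eq_big_seq c'); last first.
    move=> i /bumped_sub i_s; rewrite /c' icost_rcons //=.
    by apply: contraNneq j_s => ->.
  by have := sum_bumped c'_ge0 j (order h); have := c'_ge0 j; rewrite c'_j; lra.
- apply: (le_trans (move_cost_block_le m (M := delete_moved (icost h) j (order h)) _ _ _)) => //.
  + exact: uniq_delete_moved.
  + move=> i /mem_order i_s; rewrite present_rcons => /andP[ji _] i_nm.
    by rewrite order_rcons index_bump_delete // ?mem_s // eq_sym.
  by apply: sum_delete_moved; rewrite ?mem_s.
Qed.

Lemma block_packing_packs (P : pred R) m : (0 < m)%N ->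
  (forall x, P x -> x <= m%:R^-1) -> packs_all_but_one (block_packing m) P m.
Proof.
move=> m_gt0 P_le h wf_h ok_h; have [us mem_s _] := orderP wf_h ok_h.
have perm_items : perm_eq (items h) (order h).
  by apply: uniq_perm; rewrite ?uniq_items // => i; rewrite mem_s mem_items.
have nitemsE b : nitems h (block_packing m h) b = minn m (size (order h) - b * m).
  by rewrite /nitems size_filter (permP perm_items) count_index_div.
split.
- move=> b; rewrite /load big_seq_cond.
  apply: (@le_trans _ _ (\sum_(i <- items h | block_packing m h i == b) m%:R^-1)).
    rewrite [X in _ <= X]big_seq_cond; apply: ler_sum => i /andP[i_h _].
    by apply/P_le/(isize_inputs_ok ok_h); rewrite -mem_items.
  rewrite big_const_seq iter_addr_0 -size_filter -/(nitems _ _ b) nitemsE.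
  have m_neq0 : m%:R != 0 :> R by rewrite pnatr_eq0 -lt0n.
  apply: (@le_trans _ _ (m%:R^-1 *+ m)); last by rewrite -(mulr_natr m%:R^-1) mulVf.
  by apply: ler_wpMn2l; rewrite ?invr_ge0 ?ler0n ?geq_minl.
- apply: (@leq_trans (size [:: size (order h) %/ m]%N)) => //.
  apply: uniq_leq_size; first exact/filter_uniq/undup_uniq.
  move=> b; rewrite mem_filter mem_undup => /andP[not_full /mapP[i i_h b_i]].
  move: not_full; rewrite b_i nitemsE inE /block_packing.
  have : (index i (order h) < size (order h))%N by rewrite index_mem mem_s -mem_items.
  have := leq_divM (index i (order h)) m.
  move: (index i (order h)) (size (order h)) => k n le_qk lt_kn not_full.
  rewrite eqn_leq leq_divRL // -[(n %/ m <= _)%N]ltnS ltn_divLR // mulSn.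
  by move: (k %/ m * m)%N le_qk not_full => qm; lia.
Qed.

End BlockPacking.

Theorem lemma3p3 (R : realFieldType) :
  exists gamma : R,
    (forall k : nat, (2 <= k)%N ->
       exists A : algorithm R,
         recourse_bounded A gamma (size_class k) /\
         packs_all_but_one A (size_class k) k.-1) /\
    (forall k : nat, (1 <= k)%N ->
       exists A : algorithm R,
         recourse_bounded A gamma (size_exact k) /\
         packs_all_but_one A (size_exact k) k).
Proof.
exists 4; split=> k k_gt0.
- exists (@block_packing R k.-1); split; first exact: block_packing_recourse.
  by apply: block_packing_packs; [lia | move=> x /andP[_ /ltW]].
- exists (@block_packing R k); split; first exact: block_packing_recourse.
  by apply: block_packing_packs => // x /eqP->.
Qed.
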